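(* Let $\mathbf{T}$ be a totally ordered set, $\Bbbk$ a field, and let $F:\mathbb{U}\to\mathbb{V}$, $G:\mathbb{T}'\to\mathbb{W}$, $\varphi_1:\mathbb{T}'\to\mathbb{U}$, $\varphi_2:\mathbb{V}\to\mathbb{W}$ be homomorphisms of pointwise finite-dimensional $\mathbf{T}$-persistence modules with $G=\varphi_2\circ F\circ\varphi_1$. Let $F_\varphi:=F|_{\mathrm{im}\,\varphi_1}:\mathrm{im}\,\varphi_1\to\mathrm{im}\,F$, $\varphi_F:=\varphi_2|_{\mathrm{im}\,F}:\mathrm{im}\,F\to\mathrm{im}\,\varphi_2$, and $\varphi_*:=\varphi_2|_{\mathrm{im}\,F_\varphi}:\mathrm{im}\,F_\varphi\to\mathrm{im}\,\varphi_F$ (so $\mathrm{im}\,\varphi_*=\mathrm{im}\,G$). Define the matchings \[\mathcal{M}_\varphi:=\mathcal{J}_{F_\varphi}\circ\overline{\mathcal{Q}_{\varphi_*}}:\mathcal{B}_G\nrightarrow\mathcal{B}_F,\qquad \mathcal{E}_\varphi:=\overline{\mathcal{J}_{\varphi_*}}\circ\mathcal{Q}_{\varphi_F}:\mathcal{B}_F\nrightarrow\mathcal{B}_G.\] Then $\mathcal{M}_\varphi$ and $\overline{\mathcal{E}_\varphi}$ are injective sub-barcode matchings $\mathcal{B}_G\nrightarrow\mathcal{B}_F$.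
   Context: Persistence modules, p.f.d., intervals (nonempty convex subsets of $\mathbf{T}$), barcodes $\mathcal{B}_\mathbb{V}:\mathrm{Rep}(\mathcal{B}_\mathbb{V})\to\mathcal{I}_{\mathbf{T}}$ of p.f.d. modules (from the interval decomposition $\mathbb{V}\cong\bigoplus_\beta\Bbbk_{\mathcal{B}_\mathbb{V}(\beta)}$), and $\mathcal{B}_H:=\mathcal{B}_{\mathrm{im}\,H}$ for a homomorphism $H$, are as usual. A matching is a relation in which each element is related to at most one element; a barcode matching $M:\mathcal{A}\nrightarrow\mathcal{B}$ is a matching $M\subseteq\mathrm{Rep}(\mathcal{A})\times\mathrm{Rep}(\mathcal{B})$ with $\mathcal{A}(\alpha)\cap\mathcal{B}(\beta)\neq\emptyset$ for matched pairs. Composition of barcode matchings is $N\circ M=\{(\alpha,\gamma):\exists\beta,(\alpha,\beta)\in M,(\beta,\gamma)\in N,\ \mathcal{A}(\alpha)\cap\mathcal{C}(\gamma)\neq\emptyset\}$. The reverse of a relation $R$ is $\overline{R}=\{(b,a):(a,b)\in R\}$. A matching is injective if every bar of the domain is matched; a sub-barcode matching satisfies $\mathcal{A}(\alpha)\subseteq\mathcal{B}(\beta)$ for all matched pairs. For a homomorphism $H$ with epi–mono factorization $\mathrm{dom}\,H\xrightarrow{q_H}\mathrm{im}\,H\xrightarrow{j_H}\mathrm{cod}\,H$, $\mathcal{J}_H$ and $\mathcal{Q}_H$ denote the Bauer–Lesnick induced matchings of $j_H$ and $q_H$: for a monomorphism $m:\mathbb{X}\hookrightarrow\mathbb{Y}$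 of p.f.d. $\mathbf{T}$-modules, $\mathcal{J}(m):\mathcal{B}_\mathbb{X}\nrightarrow\mathcal{B}_\mathbb{Y}$ is obtained by grouping bars according to the upper end of their interval, ordering the bars with a given upper end in each barcode by decreasing interval (by inclusion), and matching the $i$-th bar of $\mathcal{B}_\mathbb{X}$ to the $i$-th bar of $\mathcal{B}_\mathbb{Y}$; dually, for an epimorphism $e:\mathbb{X}\twoheadrightarrow\mathbb{Y}$, $\mathcal{Q}(e)$ groups bars by lower end, orders by decreasing interval, and matches $i$-th to $i$-th. These are canonical (depending only on the existence of the mono/epi), $\mathcal{J}(m)$ is injective with $\mathcal{B}_\mathbb{X}(\alpha)\subseteq\mathcal{B}_\mathbb{Y}(\beta)$ for matched pairs, and $\mathcal{Q}(e)$ is coinjective (every bar of $\mathcal{B}_\mathbb{Y}$ matched) with $\mathcal{B}_\mathbb{X}(\alpha)\supseteq\mathcal{B}_\mathbb{Y}(\beta)$ for matched pairs. *)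

From HB Require Import structures.
From mathcomp Require Import all_boot all_order all_algebra.
Set Implicit Arguments. Unset Strict Implicit. Unset Printing Implicit Defensive.
Import Order.TTheory GRing.Theory.
Local Open Scope ring_scope.

(* Each space is a finite-dimensional K-vector space (vectType), so    *)
(* every module here is pointwise finite-dimensional (p.f.d.).         *)
(* The structure maps pm_map s t are only meaningful for s <= t.       *)
Record pmod (d : Order.disp_t) (T : orderType d) (K : fieldType) := PMod {
  pm_sp : T -> vectType K;
  pm_map : forall s t : T, 'Hom(pm_sp s, pm_sp t)
}.

Definition is_pmod d (T : orderType d) (K : fieldType) (M : pmod T K) : Prop :=
  (forall t, pm_map M t t = \1%VF) /\
  (forall s t u, (s <= t)%O -> (t <= u)%O ->
     pm_map M s u = (pm_map M t u \o pm_map M s t)%VF).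

Definition phom d (T : orderType d) (K : fieldType) (M N : pmod T K) :=
  forall t : T, 'Hom(pm_sp M t, pm_sp N t).

Definition is_phom d (T : orderType d) (K : fieldType) (M N : pmod T K)
  (f : phom M N) : Prop :=
  forall s t, (s <= t)%O ->
    (f t \o pm_map M s t)%VF = (pm_map N s t \o f s)%VF.

Definition is_interval d (T : orderType d) (I : T -> Prop) : Prop :=
  (exists t, I t) /\
  (forall s t u, (s <= t)%O -> (t <= u)%O -> I s -> I u -> I t).

(* [is_barcode_of M S B] : the submodule S of M (given pointwise by subspaces)
   has the interval decomposition S ~= (+)_b K_{B b}, with B : R -> intervals.
   The isomorphism is given by the images x b t of the generators of the
   interval modules K_{B b}: they are natural (map to the next generator
   inside the interval, to 0 when leaving it) and, at each t, the x b t with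
   t in B b form a basis of S t (in particular only finitely many bars
   contain t). *)
Definition is_barcode_of d (T : orderType d) (K : fieldType) (M : pmod T K)
  (S : forall t : T, {vspace pm_sp M t}) (R : Type) (B : R -> T -> Prop) : Prop :=
  (forall b, is_interval (B b)) /\
  exists x : forall (b : R) (t : T), pm_sp M t,
    (forall b s t, (s <= t)%O -> B b s -> B b t -> pm_map M s t (x b s) = x b t) /\
    (forall b s t, (s <= t)%O -> B b s -> ~ B b t -> pm_map M s t (x b s) = 0) /\
    (forall t, exists n (e : 'I_n -> R),
        injective e /\ (forall b, B b t <-> exists i, e i = b) /\
        basis_of (S t) [seq x (e i) t | i <- enum 'I_n]).

Definition pim d (T : orderType d) (K : fieldType) (M N : pmod T K) (H : phom M N) :
  forall t : T, {vspace pm_sp N t} := fun t => limg (H t).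

Definition same_upper d (T : orderType d) (I J : T -> Prop) : Prop :=
  forall t, (exists i, I i /\ (t <= i)%O) <-> (exists j, J j /\ (t <= j)%O).
Definition same_lower d (T : orderType d) (I J : T -> Prop) : Prop :=
  forall t, (exists i, I i /\ (i <= t)%O) <-> (exists j, J j /\ (j <= t)%O).

Definition strict_sub d (T : orderType d) (I J : T -> Prop) : Prop :=
  (forall t, I t -> J t) /\ ~ (forall t, J t -> I t).

(* [ranking grp B rk]: rk a is the position (0-based) of bar a in the list of
   bars of its group (bars with the same end, as given by grp), ordered by
   decreasing interval (ties between equal intervals broken arbitrarily). *)
Definition ranking d (T : orderType d) (grp : (T -> Prop) -> (T -> Prop) -> Prop)
  (R : Type) (B : R -> T -> Prop) (rk : R -> nat) : Prop :=
  (forall a a', grp (B a) (B a') -> rk a = rk a' -> a = a') /\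
  (forall a a', grp (B a) (B a') -> strict_sub (B a') (B a) -> (rk a < rk a')%N) /\
  (forall a m, (m < rk a)%N -> exists a', grp (B a) (B a') /\ rk a' = m).

Definition up_ranking d (T : orderType d) := @ranking d T (@same_upper d T).
Definition low_ranking d (T : orderType d) := @ranking d T (@same_lower d T).

(* Bauer--Lesnick induced matching of a monomorphism X -> Y: match the i-th
   bars (for the up-rankings) with the same upper end. *)
Definition BL_mono d (T : orderType d) (RX RY : Type)
  (BX : RX -> T -> Prop) (rkX : RX -> nat) (BY : RY -> T -> Prop) (rkY : RY -> nat)
  : RX -> RY -> Prop :=
  fun a b => same_upper (BX a) (BY b) /\ rkX a = rkY b.

(* Bauer--Lesnick induced matching of an epimorphism X -> Y: same with lower ends. *)
Definition BL_epi d (T : orderType d) (RX RY : Type)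
  (BX : RX -> T -> Prop) (rkX : RX -> nat) (BY : RY -> T -> Prop) (rkY : RY -> nat)
  : RX -> RY -> Prop :=
  fun a b => same_lower (BX a) (BY b) /\ rkX a = rkY b.

Definition rev_rel (A B : Type) (M : A -> B -> Prop) : B -> A -> Prop :=
  fun b a => M a b.

Definition bm_comp d (T : orderType d) (RA RB RC : Type)
  (A : RA -> T -> Prop) (C : RC -> T -> Prop)
  (N : RB -> RC -> Prop) (M : RA -> RB -> Prop) : RA -> RC -> Prop :=
  fun a c => (exists b, M a b /\ N b c) /\ (exists t, A a t /\ C c t).

Definition is_matching (A B : Type) (M : A -> B -> Prop) : Prop :=
  (forall a b b', M a b -> M a b' -> b = b') /\
  (forall a a' b, M a b -> M a' b -> a = a').

Definition barcode_matching d (T : orderType d) (RA RB : Type)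
  (A : RA -> T -> Prop) (B : RB -> T -> Prop) (M : RA -> RB -> Prop) : Prop :=
  is_matching M /\ (forall a b, M a b -> exists t, A a t /\ B b t).

Definition inj_sub_barcode_matching d (T : orderType d) (RA RB : Type)
  (A : RA -> T -> Prop) (B : RB -> T -> Prop) (M : RA -> RB -> Prop) : Prop :=
  barcode_matching A B M /\
  (forall a, exists b, M a b) /\
  (forall a b, M a b -> forall t, A a t -> B b t).

From HB Require Import structures.
From mathcomp Require Import all_boot all_order all_algebra.
From mathcomp Require Import boolp zify.
Set Implicit Arguments. Unset Strict Implicit. Unset Printing Implicit Defensive.
Import Order.TTheory.

(* Both matchings are composites of the reverse of an induced matching Q(f) of an
   epimorphism f : X ->> Y and of an induced matching J(m) of a monomorphism
   m : X >-> Y, and injective sub-barcode matchings compose; so it suffices that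
   rev Q(f) and J(m) are injective sub-barcode matchings.
   Fix a bar a of Y and a time t in a. Among the finitely many bars of X and Y
   alive at t, those with the lower end of a are exactly those containing some
   s2 <= t but not some earlier s1; their number is therefore
   dim im(X_s2 -> X_t) - dim im(X_s1 -> X_t), a difference that f can only
   decrease. So X has at least as many bars alive at t with the lower end of a as
   Y. Bars with a common lower end are nested, hence those alive at t are the ones
   of smallest rank, and the bar of X with the lower end and the rank of a exists
   and contains t; by uniqueness it contains all of a. Monomorphisms are handled
   the same way with upper ends, kernels of X_t -> X_u, and intersection with X
   in place of the image under f. *)

Section VectorFacts.
Variables (K : fieldType) (vT : vectType K).

Lemma sub_free (s1 s2 : seq vT) : uniq s1 -> {subset s1 <= s2} -> free s2 -> free s1.
Proof.
move=> s1_uniq s12 s2_free.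
have s2_perm : perm_eq s2 (s1 ++ [seq v <- s2 | v \notin s1]).
  apply: uniq_perm; first exact: free_uniq.
    rewrite cat_uniq s1_uniq filter_uniq ?free_uniq //= andbT.
    by apply/hasPn => v; rewrite mem_filter => /andP[].
  move=> v; rewrite mem_cat mem_filter.
  by case: (boolP (v \in s1)) => /= [/s12 ->|].
by move: s2_free; rewrite (perm_free s2_perm) => /catl_free.
Qed.

Lemma limg_dim_subv_le (wT : vectType K) (f : 'Hom(vT, wT)) (A B : {vspace vT}) :
  (B <= A)%VS -> (\dim (f @: A) + \dim B <= \dim A + \dim (f @: B))%N.
Proof.
move=> BA; have := limg_ker_dim f A; have := limg_ker_dim f B.
have : (\dim (B :&: lker f) <= \dim (A :&: lker f))%N by apply/dimvS/capvS.
lia.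
Qed.

Lemma capv_dim_subv_le (S A B : {vspace vT}) :
  (B <= A)%VS -> (\dim (S :&: A) + \dim B <= \dim A + \dim (S :&: B))%N.
Proof.
move=> BA; have := dimv_sum_cap (S :&: A) B.
have : (\dim (S :&: A + B) <= \dim A)%N by apply/dimvS; rewrite subv_add capvSr BA.
have : (\dim (S :&: A :&: B) <= \dim (S :&: B))%N by apply/dimvS/capvS; rewrite ?capvSl.
lia.
Qed.

End VectorFacts.

Section Intervals.
Variables (d : Order.disp_t) (T : orderType d).
Implicit Types (I J : T -> Prop) (s t u : T).
Local Open Scope order_scope.

Definition started I s : Prop := exists i, I i /\ i <= s.

Definition omem I (o : option T) : Prop := if o is Some s then I s else False.

Lemma interval_convex I s t u : is_interval I -> s <= t -> t <= u -> I s -> I u -> I t.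
Proof. by case=> _; apply. Qed.

Lemma is_interval_dual I : is_interval I -> @is_interval _ T^d I.
Proof. by case=> I_ne I_conv; split=> // s t u st tu Is Iu; apply: (I_conv u t s). Qed.

Lemma same_lower_refl I : same_lower I I. Proof. by []. Qed.

Lemma same_lower_sym I J : same_lower I J -> same_lower J I.
Proof. by move=> IJ t; apply: iff_sym. Qed.

Lemma same_lower_trans I J L : same_lower I J -> same_lower J L -> same_lower I L.
Proof. by move=> IJ JL t; apply: iff_trans (IJ t) (JL t). Qed.

Lemma started_le I s s' : ~ started I s -> started I s' -> s <= s'.
Proof.
move=> nIs [i [Ii is']]; case: (leP s' s) => [s's|]; last exact: ltW.
by case: nIs; exists i; split=> //; apply: le_trans s's.
Qed.

Lemma started_trans I s s' : started I s -> s <= s' -> started I s'.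
Proof. by move=> [i [Ii i_s]] ss'; exists i; split=> //; apply: le_trans ss'. Qed.

Lemma started_interval I s t : is_interval I -> I t -> started I s -> s <= t -> I s.
Proof. by move=> iI It [i [Ii i_s]] st; apply: interval_convex iI i_s st Ii It. Qed.

Lemma same_lower_strict_sub I J t : is_interval I -> is_interval J ->
  same_lower I J -> I t -> ~ J t -> strict_sub J I.
Proof.
move=> iI iJ IJ It nJt; split; last by move=> JI; apply/nJt/JI.
move=> u Ju; case: (leP u t) => [ut|tu].
  by apply: started_interval iI It _ ut; apply/IJ; exists u.
by case: nJt; apply: started_interval iJ Ju _ (ltW tu); apply/IJ; exists t.
Qed.

Lemma exists_max_witness (X : eqType) (l : seq X) (P : X -> T -> Prop) :
  exists o : option T, (forall s, o = Some s -> exists x, P x s) /\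
    forall x w, x \in l -> P x w -> exists s w', [/\ o = Some s, P x w' & w' <= s].
Proof.
elim: l => [|y l [o [o_wit o_max]]]; first by exists None.
have [[w Pyw]|nPy] := pselect (exists w, P y w); last first.
  exists o; split=> // x w; rewrite in_cons => /orP[/eqP -> Pyw|]; last exact: o_max.
  by case: nPy; exists w.
have [s' [s'_wit [ws' s'_ge]]] : exists s', (s' = w \/ o = Some s') /\
    w <= s' /\ forall s, o = Some s -> s <= s'.
  case: o {o_max} o_wit => [s|] _; last by exists w; split; [left|split].
  case: (leP s w) => [sw|/ltW ws]; first by exists w; split; [left|split=> // _ [<-]].
  by exists s; split; [right|split=> // _ [<-]].
exists (Some s'); split=> [_ [<-]|x w']; first by case: s'_wit => [->|/o_wit]; [exists y|].
rewrite in_cons => /orP[/eqP -> _|xl Pxw']; first by exists s', w; split.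
have [s [w'' [os Pxw'' w''s]]] := o_max x w' xl Pxw'.
by exists s', w''; split=> //; apply: le_trans w''s (s'_ge s os).
Qed.

End Intervals.

Lemma exists_min_witness d (T : orderType d) (X : eqType) (l : seq X)
    (P : X -> T -> Prop) :
  exists o : option T, (forall s, o = Some s -> exists x, P x s) /\
    forall x w, x \in l -> P x w -> exists s w', [/\ o = Some s, P x w' & (s <= w')%O].
Proof. exact: (@exists_max_witness _ T^d). Qed.

Section Separation.
Variables (d : Order.disp_t) (T : orderType d).
Local Open Scope order_scope.

(* [s1 = None] plays the role of a time before all of [T]. *)
Lemma lower_end_separation (X : finType) (g : X -> T -> Prop) (I0 : T -> Prop) t :
  I0 t -> (forall x, is_interval (g x) /\ g x t) ->
  exists s2 (s1 : option T), [/\ s2 <= t, forall s, s1 = Some s -> s <= s2 &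
    forall x, (same_lower (g x) I0 <-> g x s2 /\ ~ omem (g x) s1) /\
              (omem (g x) s1 -> g x s2)].
Proof.
move=> I0t g_t.
pose later x w := started I0 w /\ ~ started (g x) w.
pose earlier x v := g x v /\ ~ started I0 v.
have [o2 [o2_wit o2_min]] := exists_min_witness (enum X) later.
have [s1 [s1_wit s1_max]] := exists_max_witness (enum X) earlier.
have [s2 [I0s2 s2t s2_min]] :
    exists s2, [/\ started I0 s2, s2 <= t & forall m, o2 = Some m -> s2 = m].
  case: o2 o2_wit {o2_min} => [m /(_ m erefl) [x [I0m ngm]]|_]; last first.
    by exists t; split=> //; exists t.
  exists m; split=> // [|_ [] //].
  by apply: started_le ngm _; exists t; split=> //; apply: (g_t x).2.
have s1_lt s : s1 = Some s -> ~ started I0 s /\ s <= s2.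
  by move=> /s1_wit [x [_ nI0s]]; split=> //; apply: started_le nI0s I0s2.
exists s2, s1; split=> // [s /s1_lt [] //|x].
have [ix gxt] := g_t x.
have s1_s2 : omem (g x) s1 -> g x s2.
  case: s1 s1_lt {s1_wit s1_max} => [s /(_ s erefl) [_ ss2] /= gxs|_ []].
  exact: interval_convex ix ss2 s2t gxs gxt.
split=> //; split=> [same|[gxs2 ngxs1] w].
  split; first by apply: started_interval ix gxt _ s2t; apply/same.
  case: s1 s1_lt {s1_wit s1_max s1_s2} => [s /(_ s erefl) [nI0s _] /= gxs|_ []].
  by apply: nI0s; apply/same; exists s.
split=> [[i [gxi iw]]|I0w]; apply: contrapT => nw.
  have [|s [v [s1s [gxv _] vs]]] := s1_max x i (mem_enum _ _).
    by split=> // I0i; apply: nw; apply: started_trans I0i iw.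
  apply: ngxs1; rewrite s1s /=; have [_ ss2] := s1_lt s s1s.
  exact: interval_convex ix vs (le_trans ss2 s2t) gxv gxt.
have [m [w' [o2m [_ ngxw'] mw']]] := o2_min x w (mem_enum _ _) (conj I0w nw).
apply/ngxw'/(started_trans (s := s2)); last by rewrite (s2_min m o2m).
by exists s2.
Qed.

End Separation.

Section UpperEnds.
Variables (d : Order.disp_t) (T : orderType d).
Implicit Types (I J L : T -> Prop).

Lemma same_upper_refl I : same_upper I I. Proof. exact: (@same_lower_refl _ T^d). Qed.

Lemma same_upper_sym I J : same_upper I J -> same_upper J I.
Proof. exact: (@same_lower_sym _ T^d). Qed.

Lemma same_upper_trans I J L : same_upper I J -> same_upper J L -> same_upper I L.
Proof. exact: (@same_lower_trans _ T^d). Qed.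

Lemma same_upper_strict_sub I J t : is_interval I -> is_interval J ->
  same_upper I J -> I t -> ~ J t -> strict_sub J I.
Proof. by move=> /is_interval_dual iI /is_interval_dual; apply: same_lower_strict_sub. Qed.

Lemma upper_end_separation (X : finType) (g : X -> T -> Prop) (I0 : T -> Prop) t :
  I0 t -> (forall x, is_interval (g x) /\ g x t) ->
  exists s2 (s1 : option T), [/\ (t <= s2)%O, forall s, s1 = Some s -> (s2 <= s)%O &
    forall x, (same_upper (g x) I0 <-> g x s2 /\ ~ omem (g x) s1) /\
              (omem (g x) s1 -> g x s2)].
Proof.
move=> I0t g_t; apply: (@lower_end_separation _ T^d) => // x.
by have [/is_interval_dual ix gxt] := g_t x.
Qed.

End UpperEnds.

Definition alive_enum d (T : orderType d) (R : Type) (B : R -> T -> Prop) t n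
    (e : 'I_n -> R) : Prop :=
  injective e /\ forall b, B b t <-> exists i, e i = b.

Definition bars_card (R : Type) n (e : 'I_n -> R) (P : R -> Prop) : nat :=
  #|[pred i | `[< P (e i) >] ]|.

Lemma bars_card_cut (R : Type) n (e : 'I_n -> R) (P A C : R -> Prop) :
  (forall i, P (e i) <-> A (e i) /\ ~ C (e i)) -> (forall i, C (e i) -> A (e i)) ->
  bars_card e P + bars_card e C = bars_card e A.
Proof.
move=> PAC CA; rewrite /bars_card -[RHS](cardID [pred i | `[< C (e i) >] ]) addnC.
congr (_ + _); apply: eq_card => i; rewrite !inE; move: (PAC i) (CA i);
  case: (asboolP (P (e i))) => p; case: (asboolP (A (e i))) => a;
  by case: (asboolP (C (e i))) => c //=; tauto.
Qed.

Lemma bars_cardC (R : Type) n (e : 'I_n -> R) (P : R -> Prop) :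
  bars_card e (fun b => ~ P b) + bars_card e P = n.
Proof.
rewrite /bars_card -[RHS](card_ord n) -(cardC [pred i | `[< P (e i) >] ]) addnC.
by congr (_ + _); apply: eq_card => i; rewrite !inE asbool_neg.
Qed.

Section Rankings.
Variables (d : Order.disp_t) (T : orderType d).
Variable grp : (T -> Prop) -> (T -> Prop) -> Prop.
Hypothesis grp_refl : forall I, grp I I.
Hypothesis grp_sym : forall I J, grp I J -> grp J I.
Hypothesis grp_trans : forall I J L, grp I J -> grp J L -> grp I L.
Hypothesis grp_strict_sub : forall I J t, is_interval I -> is_interval J ->
  grp I J -> I t -> ~ J t -> strict_sub J I.

Section OneBarcode.
Variables (R : Type) (B : R -> T -> Prop) (rk : R -> nat).
Hypothesis B_interval : forall b, is_interval (B b).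
Hypothesis rk_ranking : ranking grp B rk.

Lemma ranking_class_inj I b b' : grp (B b) I -> grp (B b') I -> rk b = rk b' -> b = b'.
Proof.
by case: rk_ranking => rk_inj _ bI b'I; apply: rk_inj; apply: grp_trans bI (grp_sym b'I).
Qed.

Lemma ranking_down a m : m <= rk a -> exists a', grp (B a') (B a) /\ rk a' = m.
Proof.
case: rk_ranking => _ [_ rk_down]; rewrite leq_eqVlt => /orP[/eqP->|].
  by exists a.
by move=> /rk_down [a' [aa' <-]]; exists a'; split=> //; apply: grp_sym.
Qed.

Lemma ranking_alive a a' t : B a t -> grp (B a') (B a) -> rk a' <= rk a -> B a' t.
Proof.
case: rk_ranking => _ [rk_strict _] at_ a'a le_rk; apply: contrapT => na't.
have := rk_strict a a' (grp_sym a'a).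
move=> /(_ (grp_strict_sub (B_interval a) (B_interval a') (grp_sym a'a) at_ na't)).
by rewrite ltnNge le_rk.
Qed.

Lemma rank_lt_bars_card t n (e : 'I_n -> R) a : alive_enum B t e -> B a t ->
  rk a < bars_card e (fun b => grp (B b) (B a)).
Proof.
move=> [_ e_alive] at_.
have class_rank (m : 'I_(rk a).+1) :
    exists i, grp (B (e i)) (B a) /\ rk (e i) = m.
  have [a' [a'a rka']] : exists a', grp (B a') (B a) /\ rk a' = m.
    by apply: ranking_down; rewrite -ltnS.
  have a't : B a' t by apply: ranking_alive at_ a'a _; rewrite rka' -ltnS.
  by have [i ei] := (e_alive a').1 a't; exists i; rewrite ei.
have [f f_spec] := fin_all_exists class_rank.
have f_inj : injective f.
  by move=> m m' fm; apply: val_inj; rewrite /= -(f_spec m).2 -(f_spec m').2 fm.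
rewrite -[X in X <= _](card_ord (rk a).+1) -(card_image f_inj).
apply/subset_leq_card/subsetP => _ /imageP [m _ ->].
by rewrite inE; apply/asboolP; apply: (f_spec m).1.
Qed.

Lemma exists_rank_in_class t n (e : 'I_n -> R) (I : T -> Prop) k : alive_enum B t e ->
  k < bars_card e (fun b => grp (B b) I) -> exists c, [/\ grp (B c) I, rk c = k & B c t].
Proof.
rewrite /bars_card => -[e_inj e_alive]; set A := [pred i | _] => k_lt.
have [i0 i0A] : exists i, i \in A by apply/card_gt0P; apply: leq_ltn_trans k_lt.
have [im imA im_max] := arg_maxnP (fun i => rk (e i)) i0A.
have inA i : i \in A -> grp (B (e i)) I by rewrite inE => /asboolP.
have card_le : #|A| <= (rk (e im)).+1.
  rewrite -[X in _ <= X](card_ord (rk (e im)).+1).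
  apply: (@leq_card_in _ _ (fun i => inord (rk (e i)))) => i j iA jA /(congr1 val) /=.
  rewrite !inordK => [rk_ij||]; [|exact: im_max jA|exact: im_max iA].
  by apply/e_inj/(ranking_class_inj (inA i iA) (inA j jA)).
have [a' [a'im rka']] : exists a', grp (B a') (B (e im)) /\ rk a' = k.
  by apply: ranking_down; rewrite -ltnS; apply: leq_trans card_le.
have imt : B (e im) t by apply/e_alive; exists im.
exists a'; split=> //; first exact: grp_trans a'im (inA im imA).
by apply: ranking_alive imt a'im _; rewrite rka' -ltnS; apply: leq_trans card_le.
Qed.

End OneBarcode.

Variables (R1 R2 : Type) (B1 : R1 -> T -> Prop) (B2 : R2 -> T -> Prop).
Variables (rk1 : R1 -> nat) (rk2 : R2 -> nat).
Hypotheses (B1_interval : forall b, is_interval (B1 b))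
           (B2_interval : forall b, is_interval (B2 b)).
Hypotheses (rk1_ranking : ranking grp B1 rk1) (rk2_ranking : ranking grp B2 rk2).
Hypothesis class_card_le : forall a t, B2 a t ->
  exists n1 (e1 : 'I_n1 -> R1) n2 (e2 : 'I_n2 -> R2),
    [/\ alive_enum B1 t e1, alive_enum B2 t e2 &
        bars_card e2 (fun b => grp (B2 b) (B2 a))
        <= bars_card e1 (fun b => grp (B1 b) (B2 a))].

Lemma ranked_class_match a :
  exists c, [/\ grp (B1 c) (B2 a), rk1 c = rk2 a & forall t, B2 a t -> B1 c t].
Proof.
have match_at t : B2 a t -> exists c, [/\ grp (B1 c) (B2 a), rk1 c = rk2 a & B1 c t].
  move=> at_; have [n1 [e1 [n2 [e2 [e1_alive e2_alive card_le]]]]] := class_card_le at_.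
  apply: (exists_rank_in_class B1_interval rk1_ranking e1_alive).
  exact: leq_trans (rank_lt_bars_card B2_interval rk2_ranking e2_alive at_) card_le.
have [[t0 at0] _] := B2_interval a; have [c [ca rkc _]] := match_at t0 at0.
exists c; split=> // t at_; have [c' [c'a rkc' c't]] := match_at t at_.
by rewrite (ranking_class_inj rk1_ranking ca c'a (etrans rkc (esym rkc'))).
Qed.

Lemma ranked_matching_inj_sub (Mt : R2 -> R1 -> Prop) :
  (forall a c, Mt a c <-> grp (B1 c) (B2 a) /\ rk1 c = rk2 a) ->
  inj_sub_barcode_matching B2 B1 Mt.
Proof.
move=> MtE.
have Mt_sub a c : Mt a c -> forall t, B2 a t -> B1 c t.
  move=> /MtE [ca rkc]; have [c' [c'a rkc' c'_sub]] := ranked_class_match a.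
  by rewrite (ranking_class_inj rk1_ranking ca c'a (etrans rkc (esym rkc'))).
split; [split; [split|] | split=> // a].
- move=> a c c' /MtE [ca rkc] /MtE [c'a rkc'].
  by apply: (ranking_class_inj rk1_ranking ca c'a); rewrite rkc rkc'.
- move=> a a' c /MtE [ca rkc] /MtE [ca' rkc'].
  by apply: (ranking_class_inj rk2_ranking (grp_sym ca) (grp_sym ca')); rewrite -rkc -rkc'.
- move=> a c acM; have [[t at_] _] := B2_interval a.
  by exists t; split=> //; apply: Mt_sub acM t at_.
by have [c [ca rkc _]] := ranked_class_match a; exists c; apply/MtE.
Qed.

End Rankings.

Section BarcodeSpans.
Variables (d : Order.disp_t) (T : orderType d) (K : fieldType) (M : pmod T K).
Variables (S : forall t, {vspace pm_sp M t}) (R : Type) (B : R -> T -> Prop).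
Variable x : forall (b : R) (t : T), pm_sp M t.
Hypothesis x_barcode :
  (forall b s t, (s <= t)%O -> B b s -> B b t -> pm_map M s t (x b s) = x b t) /\
  (forall b s t, (s <= t)%O -> B b s -> ~ B b t -> pm_map M s t (x b s) = 0%R) /\
  (forall t, exists n (e : 'I_n -> R),
     injective e /\ (forall b, B b t <-> exists i, e i = b) /\
     basis_of (S t) [seq x (e i) t | i <- enum 'I_n]).

Let x_stay := x_barcode.1.
Let x_leave := x_barcode.2.1.

Definition barcode_enum t n (e : 'I_n -> R) : Prop :=
  alive_enum B t e /\ basis_of (S t) [seq x (e i) t | i <- enum 'I_n].

Lemma barcode_enum_exists t : exists n (e : 'I_n -> R), barcode_enum t e.
Proof. by have [n [e [e_inj [e_alive e_basis]]]] := x_barcode.2.2 t; exists n, e. Qed.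

Lemma barcode_vec_inj t b b' : B b t -> B b' t -> x b t = x b' t -> b = b'.
Proof.
have [n [e [[_ e_alive] e_basis]]] := barcode_enum_exists t.
move=> /e_alive [i <-] /e_alive [j <-] xij; congr e.
by have /injectiveP := free_uniq (basis_free e_basis); apply.
Qed.

Definition bars_span t n (e : 'I_n -> R) (P : R -> Prop) : {vspace pm_sp M t} :=
  <<[seq x (e i) t | i <- enum 'I_n & `[< P (e i) >] ]>>%VS.

Lemma bars_span_sub t n (e : 'I_n -> R) (P Q : R -> Prop) :
  (forall i, P (e i) -> Q (e i)) -> (bars_span t e P <= bars_span t e Q)%VS.
Proof.
move=> PQ; apply/sub_span => v /mapP [i]; rewrite mem_filter => /andP [/asboolP Pi _] ->.
by apply: map_f; rewrite mem_filter mem_enum andbT; apply/asboolP/PQ.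
Qed.

Lemma free_bars t n (e : 'I_n -> R) (P : R -> Prop) :
  injective e -> (forall i, P (e i) -> B (e i) t) ->
  free [seq x (e i) t | i <- enum 'I_n & `[< P (e i) >] ].
Proof.
move=> e_inj P_t; have [m [f [[_ f_alive] f_basis]]] := barcode_enum_exists t.
apply: (sub_free _ _ (basis_free f_basis)).
  rewrite map_inj_in_uniq => [|i j]; first exact/filter_uniq/enum_uniq.
  rewrite !mem_filter => /andP [/asboolP /P_t it _] /andP [/asboolP /P_t jt _] xij.
  exact/e_inj/(barcode_vec_inj it jt xij).
move=> v /mapP [i]; rewrite mem_filter => /andP [/asboolP /P_t /f_alive [j <-] _] ->.
exact: map_f (mem_enum _ j).
Qed.

Lemma dim_bars_span t n (e : 'I_n -> R) (P : R -> Prop) :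
  injective e -> (forall i, P (e i) -> B (e i) t) -> \dim (bars_span t e P) = bars_card e P.
Proof.
move=> e_inj P_t; rewrite /bars_span (eqP (free_bars e_inj P_t)) size_map size_filter.
by rewrite /bars_card cardE -size_filter enumT.
Qed.

Lemma limg_barcode s t n (e : 'I_n -> R) : (s <= t)%O -> alive_enum B t e ->
  (pm_map M s t @: S s)%VS = bars_span t e (B^~ s).
Proof.
move=> st [_ e_alive]; have [m [f [[_ f_alive] f_basis]]] := barcode_enum_exists s.
rewrite -(span_basis f_basis) limg_span; apply/eqP; rewrite eqEsubv.
apply/andP; split; apply/span_subvP => v.
  move=> /mapP [_ /mapP [j _ ->] ->]; have fjs : B (f j) s by apply/f_alive; exists j.
  have [fjt|nfjt] := pselect (B (f j) t); last by rewrite x_leave ?mem0v.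
  rewrite x_stay //; have [i ei] := (e_alive _).1 fjt; rewrite -ei.
  by apply/memv_span/map_f; rewrite mem_filter mem_enum andbT; apply/asboolP; rewrite ei.
move=> /mapP [i]; rewrite mem_filter => /andP [/asboolP eis _] ->.
have eit : B (e i) t by apply/e_alive; exists i.
have [j fj] := (f_alive _).1 eis.
by rewrite -(x_stay st eis eit) -fj; apply/memv_span/map_f/map_f/mem_enum.
Qed.

Lemma lker_barcode t u n (e : 'I_n -> R) : (t <= u)%O -> barcode_enum t e ->
  (S t :&: lker (pm_map M t u))%VS = bars_span t e (fun b => ~ B b u).
Proof.
move=> tu [[e_inj e_alive] e_basis].
have e_S i : x (e i) t \in S t by apply: (basis_mem e_basis); apply/map_f/mem_enum.
apply/esym/eqP; rewrite eqEdim; apply/andP; split.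
  apply/span_subvP => v /mapP [i]; rewrite mem_filter => /andP [/asboolP eiu _] ->.
  rewrite memv_cap e_S memv_ker x_leave ?eqxx //; by apply/e_alive; exists i.
have dimS : \dim (S t) = n.
  by rewrite -(span_basis e_basis) (eqP (basis_free e_basis)) size_map size_enum_ord.
have dim_img : bars_card e (B^~ u) <= \dim (pm_map M t u @: S t).
  rewrite -(@dim_bars_span u _ _ _ e_inj) //.
  have <- : (pm_map M t u @: bars_span t e (B^~ u))%VS = bars_span u e (B^~ u).
    rewrite limg_span -map_comp; congr <<_>>%VS; apply/eq_in_map => i.
    rewrite mem_filter => /andP [/asboolP eiu _] /=; apply: x_stay => //.
    by apply/e_alive; exists i.
  by apply/dimvS/limgS/span_subvP => v /mapP [i _ ->].
have := limg_ker_dim (pm_map M t u) (S t); have := bars_cardC e (B^~ u).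
rewrite dim_bars_span // => [|i _]; last by apply/e_alive; exists i.
lia.
Qed.

(* [None] stands for a time before ([image_from]) or after ([kernel_until]) all of [T]. *)
Definition image_from (o : option T) t : {vspace pm_sp M t} :=
  if o is Some s then (pm_map M s t @: S s)%VS else 0%VS.

Definition kernel_until t (o : option T) : {vspace pm_sp M t} :=
  if o is Some u then lker (pm_map M t u) else fullv.

Lemma image_from_barcode o t n (e : 'I_n -> R) :
  (forall s, o = Some s -> (s <= t)%O) -> alive_enum B t e ->
  image_from o t = bars_span t e (fun b => omem (B b) o).
Proof.
case: o => [s /(_ s erefl) st|_ _] /=; first exact: limg_barcode.
apply/esym/eqP; rewrite -subv0; apply/span_subvP => v /mapP [i].
by rewrite mem_filter => /andP [/asboolP []].
Qed.

Lemma kernel_until_barcode t o n (e : 'I_n -> R) :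
  (forall u, o = Some u -> (t <= u)%O) -> barcode_enum t e ->
  (S t :&: kernel_until t o)%VS = bars_span t e (fun b => ~ omem (B b) o).
Proof.
case: o => [u /(_ u erefl) tu|_ [_ e_basis]] /=; first exact: lker_barcode.
rewrite capvf -(span_basis e_basis) /bars_span; congr <<_>>%VS.
by rewrite (@eq_filter _ _ predT) ?filter_predT // => i; apply/asboolP.
Qed.

Lemma dim_image_from o t n (e : 'I_n -> R) :
  (forall s, o = Some s -> (s <= t)%O) -> alive_enum B t e ->
  \dim (image_from o t) = bars_card e (fun b => omem (B b) o).
Proof.
move=> ot e_enum; rewrite (image_from_barcode ot e_enum) dim_bars_span //.
  exact: e_enum.1.
by move=> i _; apply/e_enum.2; exists i.
Qed.

Lemma dim_kernel_until t o n (e : 'I_n -> R) :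
  (forall u, o = Some u -> (t <= u)%O) -> barcode_enum t e ->
  \dim (S t :&: kernel_until t o) = bars_card e (fun b => ~ omem (B b) o).
Proof.
move=> tu e_enum; rewrite (kernel_until_barcode tu e_enum) dim_bars_span //.
  exact: e_enum.1.1.
by move=> i _; apply/e_enum.1.2; exists i.
Qed.

End BarcodeSpans.

Section InducedMatchings.
Variables (d : Order.disp_t) (T : orderType d) (K : fieldType).
Local Open Scope order_scope.

Lemma limg_image_from (M1 M2 : pmod T K) (S1 : forall t, {vspace pm_sp M1 t})
    (S2 : forall t, {vspace pm_sp M2 t}) (f : phom M1 M2) o t :
  is_phom f -> (forall t, S2 t = (f t @: S1 t)%VS) -> (forall s, o = Some s -> s <= t) ->
  (f t @: image_from S1 o t)%VS = image_from S2 o t.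
Proof.
move=> f_hom S2E; case: o => [s /(_ s erefl) st|_] /=; last exact: limg0.
by rewrite -limg_comp f_hom // limg_comp S2E.
Qed.

Lemma epi_class_card_le (M1 M2 : pmod T K) (S1 : forall t, {vspace pm_sp M1 t})
    (S2 : forall t, {vspace pm_sp M2 t}) (R1 R2 : Type)
    (B1 : R1 -> T -> Prop) (B2 : R2 -> T -> Prop) (f : phom M1 M2) :
  is_barcode_of S1 B1 -> is_barcode_of S2 B2 ->
  is_phom f -> (forall t, S2 t = (f t @: S1 t)%VS) ->
  forall a t, B2 a t -> exists n1 (e1 : 'I_n1 -> R1) n2 (e2 : 'I_n2 -> R2),
    [/\ alive_enum B1 t e1, alive_enum B2 t e2 &
        (bars_card e2 (fun b => same_lower (B2 b) (B2 a))
         <= bars_card e1 (fun b => same_lower (B1 b) (B2 a)))%N].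
Proof.
move=> [B1_int [x1 x1_barcode]] [B2_int [x2 x2_barcode]] f_hom S2E a t at_.
have [n1 [e1 [e1_enum _]]] := barcode_enum_exists x1_barcode t.
have [n2 [e2 [e2_enum _]]] := barcode_enum_exists x2_barcode t.
exists n1, e1, n2, e2; split=> //.
pose g z := match z with inl i => B1 (e1 i) | inr j => B2 (e2 j) end.
have [|s2 [s1 [s2t s1s2 sep]]] := lower_end_separation (g := g) at_.
  case=> [i|j] /=; split; [exact: B1_int| |exact: B2_int|].
    by apply/e1_enum.2; exists i.
  by apply/e2_enum.2; exists j.
have s1_le s : s1 = Some s -> s <= t by move=> /s1s2 /le_trans; apply.
have s2_le s : Some s2 = Some s -> s <= t by move=> [<-].
have card1 := bars_card_cut (P := fun b => same_lower (B1 b) (B2 a))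
  (A := fun b => omem (B1 b) (Some s2)) (C := fun b => omem (B1 b) s1)
  (fun i => (sep (inl i)).1) (fun i => (sep (inl i)).2).
have card2 := bars_card_cut (P := fun b => same_lower (B2 b) (B2 a))
  (A := fun b => omem (B2 b) (Some s2)) (C := fun b => omem (B2 b) s1)
  (fun i => (sep (inr i)).1) (fun i => (sep (inr i)).2).
have nested : (image_from S1 s1 t <= image_from S1 (Some s2) t)%VS.
  rewrite (image_from_barcode x1_barcode s1_le e1_enum).
  rewrite (image_from_barcode x1_barcode s2_le e1_enum).
  by apply: bars_span_sub => i; apply: (sep (inl i)).2.
have := limg_dim_subv_le (f t) nested.
rewrite (limg_image_from f_hom S2E s1_le) (limg_image_from f_hom S2E s2_le).
rewrite (dim_image_from x1_barcode s1_le e1_enum) (dim_image_from x1_barcode s2_le e1_enum).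
rewrite (dim_image_from x2_barcode s1_le e2_enum) (dim_image_from x2_barcode s2_le e2_enum).
lia.
Qed.

Lemma mono_class_card_le (M : pmod T K) (S1 S2 : forall t, {vspace pm_sp M t})
    (R1 R2 : Type) (B1 : R1 -> T -> Prop) (B2 : R2 -> T -> Prop) :
  is_barcode_of S1 B1 -> is_barcode_of S2 B2 -> (forall t, (S1 t <= S2 t)%VS) ->
  forall a t, B1 a t -> exists n2 (e2 : 'I_n2 -> R2) n1 (e1 : 'I_n1 -> R1),
    [/\ alive_enum B2 t e2, alive_enum B1 t e1 &
        (bars_card e1 (fun b => same_upper (B1 b) (B1 a))
         <= bars_card e2 (fun b => same_upper (B2 b) (B1 a)))%N].
Proof.
move=> [B1_int [x1 x1_barcode]] [B2_int [x2 x2_barcode]] S12 a t at_.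
have [n1 [e1 e1_enum]] := barcode_enum_exists x1_barcode t.
have [n2 [e2 e2_enum]] := barcode_enum_exists x2_barcode t.
exists n2, e2, n1, e1; split; [exact: e2_enum.1|exact: e1_enum.1|].
pose g z := match z with inl i => B1 (e1 i) | inr j => B2 (e2 j) end.
have [|u2 [u1 [tu2 u2u1 sep]]] := upper_end_separation (g := g) at_.
  case=> [i|j] /=; split; [exact: B1_int| |exact: B2_int|].
    by apply/e1_enum.1.2; exists i.
  by apply/e2_enum.1.2; exists j.
have u1_ge u : u1 = Some u -> t <= u by move=> /u2u1; apply: le_trans.
have u2_ge u : Some u2 = Some u -> t <= u by move=> [<-].
have card1 := bars_card_cut (P := fun b => same_upper (B1 b) (B1 a))
  (A := fun b => omem (B1 b) (Some u2)) (C := fun b => omem (B1 b) u1)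
  (fun i => (sep (inl i)).1) (fun i => (sep (inl i)).2).
have card2 := bars_card_cut (P := fun b => same_upper (B2 b) (B1 a))
  (A := fun b => omem (B2 b) (Some u2)) (C := fun b => omem (B2 b) u1)
  (fun i => (sep (inr i)).1) (fun i => (sep (inr i)).2).
have S1_cap o : (S1 t :&: (S2 t :&: kernel_until M t o))%VS = (S1 t :&: kernel_until M t o)%VS.
  by rewrite capvA (capv_idPl (S12 t)).
have nested : (S2 t :&: kernel_until M t (Some u2) <= S2 t :&: kernel_until M t u1)%VS.
  rewrite (kernel_until_barcode x2_barcode u1_ge e2_enum).
  rewrite (kernel_until_barcode x2_barcode u2_ge e2_enum).
  by apply: bars_span_sub => i nu2 /(sep (inr i)).2.
have := capv_dim_subv_le (S1 t) nested; rewrite !S1_cap.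
rewrite (dim_kernel_until x1_barcode u1_ge e1_enum) (dim_kernel_until x1_barcode u2_ge e1_enum).
rewrite (dim_kernel_until x2_barcode u1_ge e2_enum) (dim_kernel_until x2_barcode u2_ge e2_enum).
have := bars_cardC e1 (fun b => omem (B1 b) u1).
have := bars_cardC e1 (fun b => omem (B1 b) (Some u2)).
have := bars_cardC e2 (fun b => omem (B2 b) u1).
have := bars_cardC e2 (fun b => omem (B2 b) (Some u2)).
lia.
Qed.

End InducedMatchings.

Lemma rev_BL_epi_inj_sub d (T : orderType d) (K : fieldType) (M1 M2 : pmod T K)
    (S1 : forall t, {vspace pm_sp M1 t}) (S2 : forall t, {vspace pm_sp M2 t})
    (R1 R2 : Type) (B1 : R1 -> T -> Prop) (B2 : R2 -> T -> Prop) (f : phom M1 M2)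
    (rk1 : R1 -> nat) (rk2 : R2 -> nat) :
  is_barcode_of S1 B1 -> is_barcode_of S2 B2 ->
  is_phom f -> (forall t, S2 t = (f t @: S1 t)%VS) ->
  low_ranking B1 rk1 -> low_ranking B2 rk2 ->
  inj_sub_barcode_matching B2 B1 (rev_rel (BL_epi B1 rk1 B2 rk2)).
Proof.
move=> hB1 hB2 f_hom S2E rk1_ranking rk2_ranking.
apply: (ranked_matching_inj_sub (@same_lower_refl _ T) (@same_lower_sym _ T)
  (@same_lower_trans _ T) (@same_lower_strict_sub _ T) hB1.1 hB2.1 rk1_ranking rk2_ranking).
  exact: epi_class_card_le hB1 hB2 f_hom S2E.
by [].
Qed.

Lemma BL_mono_inj_sub d (T : orderType d) (K : fieldType) (M : pmod T K)
    (S1 S2 : forall t, {vspace pm_sp M t}) (R1 R2 : Type)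
    (B1 : R1 -> T -> Prop) (B2 : R2 -> T -> Prop) (rk1 : R1 -> nat) (rk2 : R2 -> nat) :
  (forall t, (S1 t <= S2 t)%VS) -> is_barcode_of S1 B1 -> is_barcode_of S2 B2 ->
  up_ranking B1 rk1 -> up_ranking B2 rk2 ->
  inj_sub_barcode_matching B1 B2 (BL_mono B1 rk1 B2 rk2).
Proof.
move=> S12 hB1 hB2 rk1_ranking rk2_ranking.
apply: (ranked_matching_inj_sub (@same_upper_refl _ T) (@same_upper_sym _ T)
  (@same_upper_trans _ T) (@same_upper_strict_sub _ T) hB2.1 hB1.1 rk2_ranking rk1_ranking).
  exact: mono_class_card_le hB1 hB2 S12.
by move=> a c; split=> -[same rk_eq]; split=> //; apply: same_upper_sym.
Qed.

Section MatchingComposition.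
Variables (d : Order.disp_t) (T : orderType d) (RA RB RC : Type).
Variables (A : RA -> T -> Prop) (B : RB -> T -> Prop) (C : RC -> T -> Prop).
Variables (M : RA -> RB -> Prop) (N : RB -> RC -> Prop).

Lemma inj_sub_barcode_matching_comp :
  inj_sub_barcode_matching A B M -> inj_sub_barcode_matching B C N ->
  inj_sub_barcode_matching A C (bm_comp A C N M).
Proof.
move=> [[[M_fun M_inj] M_meet] [M_tot M_sub]] [[[N_fun N_inj] _] [N_tot N_sub]].
split; [split; [split|] | split].
- move=> a c c' [[b [ab bc]] _] [[b' [ab' b'c']] _].
  by move: bc; rewrite (M_fun _ _ _ ab ab') => /N_fun; apply.
- move=> a a' c [[b [ab bc]] _] [[b' [a'b' b'c]] _].
  by move: ab; rewrite (N_inj _ _ _ bc b'c) => /M_inj; apply.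
- by move=> a c [_ meet].
- move=> a; have [b ab] := M_tot a; have [c bc] := N_tot b.
  have [t [at_ _]] := M_meet _ _ ab.
  by exists c; split; [exists b | exists t; split=> //; apply/(N_sub _ _ bc)/(M_sub _ _ ab)].
by move=> a c [[b [ab bc]] _] t at_; apply/(N_sub _ _ bc)/(M_sub _ _ ab).
Qed.

Lemma rev_bm_comp : rev_rel (bm_comp C A (rev_rel M) (rev_rel N)) = bm_comp A C N M.
Proof.
apply/funext => a; apply/funext => c; apply/propext.
by split=> -[[b [? ?]] [t [? ?]]]; split; [exists b | exists t | exists b | exists t].
Qed.

Lemma inj_sub_barcode_matching_rev_comp :
  inj_sub_barcode_matching A B M -> inj_sub_barcode_matching B C N ->
  inj_sub_barcode_matching A C (rev_rel (bm_comp C A (rev_rel M) (rev_rel N))).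
Proof. by rewrite rev_bm_comp; apply: inj_sub_barcode_matching_comp. Qed.

End MatchingComposition.

Theorem lemma3p6 (d : Order.disp_t) (T : orderType d) (K : fieldType)
  (U V T' W : pmod T K)
  (hU : is_pmod U) (hV : is_pmod V) (hT' : is_pmod T') (hW : is_pmod W)
  (F : phom U V) (G : phom T' W) (phi1 : phom T' U) (phi2 : phom V W)
  (hF : is_phom F) (hG : is_phom G) (hphi1 : is_phom phi1) (hphi2 : is_phom phi2)
  (hGeq : forall t, G t = (phi2 t \o F t \o phi1 t)%VF)
  (* B_G : barcode of im G = im phi_* *)
  (RG : Type) (BG : RG -> T -> Prop) (hBG : is_barcode_of (pim G) BG)
  (* B_F : barcode of im F *)
  (RF : Type) (BF : RF -> T -> Prop) (hBF : is_barcode_of (pim F) BF)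
  (* barcode of im F_phi = F(im phi1) *)
  (RFp : Type) (BFp : RFp -> T -> Prop)
  (hBFp : is_barcode_of (fun t => (F t @: limg (phi1 t))%VS) BFp)
  (* barcode of im phi_F = phi2(im F) *)
  (RpF : Type) (BpF : RpF -> T -> Prop)
  (hBpF : is_barcode_of (fun t => (phi2 t @: limg (F t))%VS) BpF)
  (* orderings (with arbitrary tie-breaking) used by the induced matchings *)
  (upFp : RFp -> nat) (upF : RF -> nat) (upG : RG -> nat) (uppF : RpF -> nat)
  (lowFp : RFp -> nat) (lowF : RF -> nat) (lowG : RG -> nat) (lowpF : RpF -> nat)
  (hupFp : up_ranking BFp upFp) (hupF : up_ranking BF upF)
  (hupG : up_ranking BG upG) (huppF : up_ranking BpF uppF)
  (hlowFp : low_ranking BFp lowFp) (hlowF : low_ranking BF lowF)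
  (hlowG : low_ranking BG lowG) (hlowpF : low_ranking BpF lowpF) :
  let J_Fphi := BL_mono BFp upFp BF upF in      (* J_{F_phi} : B_{im F_phi} -/-> B_F *)
  let Q_phistar := BL_epi BFp lowFp BG lowG in  (* Q_{phi_*} : B_{im F_phi} -/-> B_G *)
  let Q_phiF := BL_epi BF lowF BpF lowpF in     (* Q_{phi_F} : B_F -/-> B_{im phi_F} *)
  let J_phistar := BL_mono BG upG BpF uppF in   (* J_{phi_*} : B_G -/-> B_{im phi_F} *)
  let M_phi := bm_comp BG BF J_Fphi (rev_rel Q_phistar) in
  let E_phi := bm_comp BF BG (rev_rel J_phistar) Q_phiF in
  inj_sub_barcode_matching BG BF M_phi /\
  inj_sub_barcode_matching BG BF (rev_rel E_phi).
Proof.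
move=> J_Fphi Q_phistar Q_phiF J_phistar M_phi E_phi.
have imG t : pim G t = (phi2 t @: (F t @: limg (phi1 t)))%VS by rewrite /pim hGeq !limg_comp.
have Q_phistar_inj := rev_BL_epi_inj_sub hBFp hBG hphi2 imG hlowFp hlowG.
have J_Fphi_inj := BL_mono_inj_sub (fun t => limgS (F t) (subvf (limg (phi1 t)))) hBFp hBF
  hupFp hupF.
have J_phistar_inj : inj_sub_barcode_matching BG BpF J_phistar.
  by apply: BL_mono_inj_sub hBG hBpF hupG huppF => t; rewrite imG; apply/limgS/limgS/subvf.
have Q_phiF_inj := rev_BL_epi_inj_sub hBF hBpF hphi2 (fun t => erefl) hlowF hlowpF.
split; first exact: inj_sub_barcode_matching_comp Q_phistar_inj J_Fphi_inj.
exact: inj_sub_barcode_matching_rev_comp J_phistar_inj Q_phiF_inj.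
Qed.
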